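(* Let $\tau\in\mathbb R$ and let $(\vartheta(s),\omega(s))$, $s\in J$ ($J$ an interval containing $0$), be a $C^1$ solution with $\vartheta(s)\in(-\pi/2,\pi/2)$ of $\dot\vartheta=\omega$, $\dot\omega=-\tau^2\tan\vartheta/\cos^2\vartheta$ with $\vartheta(0)=0$; let $E\ge0$ with $E^2=\omega^2+\tau^2\tan^2\vartheta$ (constant along the solution), assume $E^2+\tau^2>0$ and put $\Omega=\sqrt{E^2+\tau^2}$. Let $\varphi(s)$ satisfy $\dot\varphi(s)=\tau\tan^2\vartheta(s)$ on $J$. Then $$\varphi(s)-\varphi(0)=A(s)-\tau s\qquad(s\in J),$$ where $A$ is the continuous function on $J$ with $A(0)=0$ and $\tan A(s)=\frac{\tau}{\Omega}\tan(\Omega s)$ whenever $\cos(\Omega s)\ne0$ (i.e. $A(s)=\tan^{-1}\big(\frac{\tau}{\Omega}\tan\Omega s\big)$ continued continuously). *)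

From Stdlib Require Export Reals.
Open Scope R_scope.

Definition is_interval (J : R -> Prop) : Prop :=
  forall a b x, J a -> J b -> a <= x <= b -> J x.

Definition has_deriv_within (J : R -> Prop) (f : R -> R) (d : R) (x : R) : Prop :=
  forall eps, 0 < eps -> exists delta, 0 < delta /\
    forall y, J y -> y <> x -> Rabs (y - x) < delta ->
      Rabs ((f y - f x) / (y - x) - d) < eps.

Definition continuous_within (J : R -> Prop) (f : R -> R) (x : R) : Prop :=
  forall eps, 0 < eps -> exists delta, 0 < delta /\
    forall y, J y -> Rabs (y - x) < delta -> Rabs (f y - f x) < eps.

Definition A_spec (J : R -> Prop) (tau Om : R) (A : R -> R) : Prop :=
  (forall s, J s -> continuous_within J A s) /\ A 0 = 0 /\
  (forall s, J s -> cos (Om * s) <> 0 -> tan (A s) = tau / Om * tan (Om * s)).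

(* Since [omega^2 + tau^2 / cos^2 theta = E^2 + tau^2 = Om^2] is conserved, the pair
   [(sin theta, omega cos theta)] solves the harmonic oscillator [z' = v, v' = - Om^2 z];
   hence [sin theta = omega(0) / Om * sin (Om s)] and
   [cos^2 theta = cos^2 (Om s) + (tau / Om)^2 sin^2 (Om s)].  The function
   [D s = phi s - phi 0 + tau s] then has [D' = tau / cos^2 theta], the derivative of a
   branch of [atan ((tau / Om) tan (Om s))]; a conserved quantity shows
   [(tau / Om) sin (Om s) cos D = cos (Om s) sin D], so [D] is a valid [A].  Two valid [A]
   differ by a continuous function with values in [(PI / 2) Z] off the discrete zero set of
   [cos (Om s)], hence everywhere, and it vanishes at [0]; so [A = D]. *)

From Stdlib Require Import Reals Lra.
Open Scope R_scope.

(* Clamping to [a, b] turns a function known on [a, b] (with one-sided derivatives at the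
   ends) into a function on [R] with the same two-sided derivatives inside, so that the
   calculus of Stdlib's [derivable_pt_lim] and [continuity_pt] applies. *)
Definition clamp (a b x : R) : R := Rmax a (Rmin b x).

Lemma clamp_mem a b x : a <= b -> a <= clamp a b x <= b.
Proof. intros; unfold clamp, Rmax, Rmin; repeat destruct Rle_dec; lra. Qed.

Lemma clamp_id a b x : a <= x <= b -> clamp a b x = x.
Proof. intros; unfold clamp, Rmax, Rmin; repeat destruct Rle_dec; lra. Qed.

Lemma clamp_lipschitz a b x y : a <= b -> Rabs (clamp a b x - clamp a b y) <= Rabs (x - y).
Proof.
  intros; unfold clamp, Rmax, Rmin; repeat destruct Rle_dec;
  unfold Rabs; repeat destruct Rcase_abs; lra.
Qed.

Lemma has_deriv_within_continuous J f d x :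
  has_deriv_within J f d x -> continuous_within J f x.
Proof.
  intros Hd eps Heps.
  destruct (Hd 1 Rlt_0_1) as [del [Hdel Hq]].
  set (k := Rabs d + 1).
  assert (Hk : 0 < k) by (unfold k; generalize (Rabs_pos d); lra).
  exists (Rmin del (eps / k)); split; [apply Rmin_pos; [lra | apply Rdiv_lt_0_compat; lra]|].
  intros y Hy Hxy.
  assert (Hdel' := Rmin_l del (eps / k)). assert (Heps' := Rmin_r del (eps / k)).
  destruct (Req_dec y x) as [->|Hne]; [rewrite Rminus_diag, Rabs_R0; lra|].
  assert (Hslope : Rabs ((f y - f x) / (y - x)) <= k).
  { specialize (Hq y Hy Hne ltac:(lra)).
    replace ((f y - f x) / (y - x)) with (((f y - f x) / (y - x) - d) + d) by ring.
    unfold k; eapply Rle_trans; [apply Rabs_triang | lra]. }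
  replace (f y - f x) with ((f y - f x) / (y - x) * (y - x)) by (field; lra).
  rewrite Rabs_mult.
  apply Rle_lt_trans with (k * Rabs (y - x)).
  - apply Rmult_le_compat_r; [apply Rabs_pos | exact Hslope].
  - replace eps with (k * (eps / k)) by (field; lra).
    apply Rmult_lt_compat_l; lra.
Qed.

Lemma has_deriv_within_shift J f d x k t : has_deriv_within J f d x ->
  has_deriv_within J (fun y => f y - k + t * y) (d + t) x.
Proof.
  intros H eps Heps. destruct (H eps Heps) as [del [Hdel Hq]].
  exists del; split; [exact Hdel|]. intros y Hy Hne Hyx.
  replace ((f y - k + t * y - (f x - k + t * x)) / (y - x) - (d + t))
    with ((f y - f x) / (y - x) - d) by (field; lra).
  auto.
Qed.

Lemma interval_segment J s : is_interval J -> J 0 -> J s ->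
  forall x, Rmin 0 s <= x <= Rmax 0 s -> J x.
Proof.
  intros HJ H0 Hs x Hx. unfold Rmin, Rmax in Hx.
  destruct (Rle_dec 0 s); [apply (HJ 0 s) | apply (HJ s 0)]; auto; lra.
Qed.

Lemma segment_bounds s : Rmin 0 s <= 0 <= Rmax 0 s /\ Rmin 0 s <= s <= Rmax 0 s.
Proof. unfold Rmin, Rmax; destruct Rle_dec; lra. Qed.

Section ClampedSegment.

Variables (J : R -> Prop) (a b : R).
Hypothesis segment_in_J : forall x, a <= x <= b -> J x.

Lemma continuity_clamp f : a <= b ->
  (forall x, a <= x <= b -> continuous_within J f x) ->
  continuity (fun x => f (clamp a b x)).
Proof.
  intros Hab Hc x eps Heps.
  destruct (Hc (clamp a b x) (clamp_mem a b x Hab) eps Heps) as [d [Hd Hnear]].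
  exists d; split; [lra|]. intros y [_ Hy]; simpl in *.
  apply Hnear; [apply segment_in_J, clamp_mem, Hab|].
  eapply Rle_lt_trans; [apply clamp_lipschitz; lra | exact Hy].
Qed.

Lemma derivable_pt_lim_clamp f d x : a < x < b ->
  has_deriv_within J f d x -> derivable_pt_lim (fun y => f (clamp a b y)) x d.
Proof.
  intros Hx Hd eps Heps.
  destruct (Hd eps Heps) as [del [Hdel Hq]].
  set (r := Rmin del (Rmin (x - a) (b - x))).
  assert (Hr : 0 < r) by (repeat apply Rmin_pos; lra).
  assert (Hr1 := Rmin_l del (Rmin (x - a) (b - x))).
  assert (Hr2 := Rmin_r del (Rmin (x - a) (b - x))).
  assert (Hr3 := Rmin_l (x - a) (b - x)). assert (Hr4 := Rmin_r (x - a) (b - x)).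
  exists (mkposreal r Hr). intros h Hh0 Hh; simpl in Hh.
  assert (Habs : - h <= Rabs h /\ h <= Rabs h) by (unfold Rabs; destruct Rcase_abs; lra).
  rewrite !clamp_id by (unfold r in *; lra).
  specialize (Hq (x + h)). replace (x + h - x) with h in Hq by ring.
  apply Hq; [apply segment_in_J | |]; unfold r in *; lra.
Qed.

End ClampedSegment.

Lemma segment_constant g a b :
  (forall x, a <= x <= b -> continuity_pt g x) ->
  (forall x, a < x < b -> derivable_pt_lim g x 0) ->
  forall x y, a <= x <= b -> a <= y <= b -> g x = g y.
Proof.
  intros Hc Hd x y Hx Hy.
  destruct (Rlt_le_dec a b) as [Hab|Hba]; [|replace x with y by lra; reflexivity].
  pose (pr := fun t (P : a < t < b) => exist (fun l => derivable_pt_lim g t l) 0 (Hd t P)).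
  assert (Hconst := null_derivative_loc g a b pr Hc (fun t P => eq_refl)).
  rewrite (Hconst x Hx), (Hconst y Hy); reflexivity.
Qed.

Lemma derivable_pt_lim_value f x l l' :
  derivable_pt_lim f x l -> l = l' -> derivable_pt_lim f x l'.
Proof. intros H <-; exact H. Qed.

Ltac derive_step :=
  repeat first
    [ eassumption
    | apply derivable_pt_lim_const | apply derivable_pt_lim_id
    | apply derivable_pt_lim_minus | apply derivable_pt_lim_plus
    | apply derivable_pt_lim_div | apply derivable_pt_lim_mult
    | apply (derivable_pt_lim_comp _ sin); [|apply derivable_pt_lim_sin]
    | apply (derivable_pt_lim_comp _ cos); [|apply derivable_pt_lim_cos]
    | apply (derivable_pt_lim_comp _ (fun u => u ^ 2)); [|apply derivable_pt_lim_pow] ].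

Ltac differentiate := eapply derivable_pt_lim_value; [derive_step | cbv beta].

Ltac prove_continuity :=
  repeat first
    [ assumption
    | match goal with H : continuity ?f |- continuity_pt ?f _ => apply H end
    | apply continuity_pt_const; intros ? ?; reflexivity
    | apply continuity_pt_minus | apply continuity_pt_plus
    | apply continuity_pt_div | apply continuity_pt_mult
    | apply derivable_continuous_pt, derivable_pt_id
    | apply (continuity_pt_comp _ sin); [|apply continuity_sin]
    | apply (continuity_pt_comp _ cos); [|apply continuity_cos]
    | apply (continuity_pt_comp _ (fun u => u ^ 2));
        [|apply derivable_continuous, derivable_pow] ].

(* The derivative prescribed for [D] is that of a branch of [atan (c * tan (Om * s))]. *)
Lemma scaled_tan_relation_of_deriv J (c Om : R) (D : R -> R) :
  is_interval J -> J 0 -> D 0 = 0 ->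
  (forall s, J s -> 0 < cos (Om * s) ^ 2 + c ^ 2 * sin (Om * s) ^ 2) ->
  (forall s, J s ->
     has_deriv_within J D (c * Om / (cos (Om * s) ^ 2 + c ^ 2 * sin (Om * s) ^ 2)) s) ->
  forall s, J s -> c * sin (Om * s) * cos (D s) = cos (Om * s) * sin (D s).
Proof.
  intros HJ HJ0 HD0 HT HdD s Hs.
  assert (HJab := interval_segment J s HJ HJ0 Hs).
  destruct (segment_bounds s) as [H0ab Hsab].
  set (a := Rmin 0 s) in *. set (b := Rmax 0 s) in *.
  set (T := fun y => cos (Om * y) ^ 2 + c ^ 2 * sin (Om * y) ^ 2).
  set (Dc := fun y => D (clamp a b y)).
  set (N := fun y => c * sin (Om * y) * cos (Dc y) - cos (Om * y) * sin (Dc y)).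
  (* [N' = N T' / (2 T)], so [N^2 / T] is constant. *)
  set (G := fun y => N y * N y / T y).
  assert (HcDc : continuity Dc).
  { apply (continuity_clamp J); [auto | lra |].
    intros x Hx; eapply has_deriv_within_continuous, HdD, HJab, Hx. }
  assert (HcG : forall x, a <= x <= b -> continuity_pt G x).
  { intros x Hx. unfold G, N, T. prove_continuity.
    apply Rgt_not_eq, HT, HJab, Hx. }
  assert (HdG : forall x, a < x < b -> derivable_pt_lim G x 0).
  { intros x Hx.
    assert (HTx : 0 < T x) by (apply HT, HJab; lra).
    set (cu := cos (Om * x)). set (su := sin (Om * x)).
    assert (Hpyth : su ^ 2 + cu ^ 2 = 1)
      by (rewrite <- (sin2_cos2 (Om * x)); unfold Rsqr; fold cu su; ring).
    assert (dDc : derivable_pt_lim Dc x (c * Om / T x))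
      by (apply (derivable_pt_lim_clamp J); [auto | lra | apply HdD, HJab; lra]).
    assert (dT : derivable_pt_lim T x (2 * Om * su * cu * (c ^ 2 - 1))).
    { unfold T. differentiate. fold cu su. simpl. ring. }
    assert (dN : derivable_pt_lim N x (N x * (2 * Om * su * cu * (c ^ 2 - 1)) / (2 * T x))).
    { assert (HTx' : 0 < cu ^ 2 + c ^ 2 * su ^ 2) by exact HTx.
      unfold N. differentiate. unfold T; fold cu su.
      apply Rminus_diag_uniq.
      match goal with |- ?L - ?R = 0 =>
        replace (L - R) with (Om * (su ^ 2 + cu ^ 2 - 1) * (c * cu * cos (Dc x)
            + c ^ 2 * su * sin (Dc x)) / (cu ^ 2 + c ^ 2 * su ^ 2)) by (field; lra) end.
      rewrite Hpyth. field. lra. }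
    unfold G. differentiate; [lra | unfold Rsqr; field; lra]. }
  assert (HG0 : G 0 = 0).
  { unfold G, N, Dc. rewrite clamp_id, HD0, Rmult_0_r, sin_0, cos_0 by lra.
    field. unfold T. rewrite Rmult_0_r, sin_0, cos_0. lra. }
  assert (HGs : G s = 0) by (rewrite (segment_constant G a b HcG HdG s 0); lra).
  assert (HNs : N s * N s = 0).
  { assert (HTs : 0 < T s) by exact (HT s Hs).
    unfold G in HGs. replace (N s * N s) with (N s * N s / T s * T s) by (field; lra).
    rewrite HGs; ring. }
  apply Rmult_integral in HNs. unfold N, Dc in HNs. rewrite clamp_id in HNs by lra. lra.
Qed.

Lemma tan_of_scaled_tan_relation c u D :
  c * sin u * cos D = cos u * sin D -> cos u <> 0 -> tan D = c * tan u.
Proof.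
  intros H Hu.
  assert (HD : cos D <> 0).
  { intro HD0. rewrite HD0, Rmult_0_r in H.
    assert (Hpyth := sin2_cos2 D). rewrite HD0 in Hpyth. unfold Rsqr in Hpyth.
    destruct (Rmult_integral _ _ (eq_sym H)); [contradiction | nra]. }
  unfold tan. field_simplify_eq; [lra | auto].
Qed.

(* This survives the junk value [tan (PI / 2) = 0] coming from [x / 0 = 0]. *)
Lemma sin_double_sub_of_tan_eq x y : tan x = tan y -> sin (2 * (x - y)) = 0.
Proof.
  unfold tan; intro H. rewrite sin_2a, sin_minus, cos_minus.
  assert (Hdiv0 : forall t, sin t / 0 = 0) by (intro; unfold Rdiv; rewrite Rinv_0; ring).
  assert (Hsin0 : forall t, cos t <> 0 -> sin t / cos t = 0 -> sin t = 0).
  { intros t Ht Hq. replace (sin t) with (sin t / cos t * cos t) by (field; auto).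
    rewrite Hq; ring. }
  destruct (Req_dec (cos x) 0) as [Hx|Hx]; destruct (Req_dec (cos y) 0) as [Hy|Hy].
  - rewrite Hx, Hy; ring.
  - rewrite Hx, Hdiv0 in H. rewrite Hx, (Hsin0 y Hy (eq_sym H)); ring.
  - rewrite Hy, Hdiv0 in H. rewrite Hy, (Hsin0 x Hx H); ring.
  - replace (sin x * cos y - cos x * sin y) with 0; [ring|].
    replace (sin x) with (sin y / cos y * cos x) by (rewrite <- H; field; auto).
    field; auto.
Qed.

Lemma eq_zero_of_sin_double_zero k : sin (2 * k) = 0 -> - (PI / 4) <= k <= PI / 4 -> k = 0.
Proof.
  intros Hs Hk. assert (HPI := PI_RGT_0).
  destruct (Rtotal_order k 0) as [Hlt|[Heq|Hgt]]; [|exact Heq|].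
  - assert (sin (2 * k) < 0) by (apply sin_lt_0_var; lra). lra.
  - assert (0 < sin (2 * k)) by (apply sin_gt_0; lra). lra.
Qed.

Lemma continuous_zero_of_sin_double_zero K u v p q : continuity K ->
  u <= p <= v -> u <= q <= v ->
  (forall t, u <= t <= v -> sin (2 * K t) = 0) -> K p = 0 -> K q = 0.
Proof.
  intros HK Hp Hq Hs Hp0. assert (HPI := PI_RGT_0).
  assert (Hcross : forall l, (K p - l) * (K q - l) <= 0 -> exists t, u <= t <= v /\ K t = l).
  { intros l Hl. set (f := fun t => K t - l).
    assert (Hf : continuity f) by (intro x; unfold f; prove_continuity).
    destruct (Rle_dec p q).
    - destruct (IVT_cor f p q Hf r Hl) as [t [Ht Hft]]. exists t; unfold f in Hft; split; lra.
    - destruct (IVT_cor f q p Hf ltac:(lra) ltac:(unfold f; lra)) as [t [Ht Hft]].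
      exists t; unfold f in Hft; split; lra. }
  apply eq_zero_of_sin_double_zero; [apply Hs, Hq|].
  split; apply Rnot_lt_le; intro Hout.
  - destruct (Hcross (- (PI / 4))) as [t [Ht HKt]]; [rewrite Hp0; nra|].
    assert (Hst := Hs t Ht). rewrite HKt in Hst.
    replace (2 * - (PI / 4)) with (- (PI / 2)) in Hst by field.
    rewrite sin_neg, sin_PI2 in Hst. lra.
  - destruct (Hcross (PI / 4)) as [t [Ht HKt]]; [rewrite Hp0; nra|].
    assert (Hst := Hs t Ht). rewrite HKt in Hst.
    replace (2 * (PI / 4)) with (PI / 2) in Hst by field.
    rewrite sin_PI2 in Hst. lra.
Qed.

Lemma cos_nonzero_near a b x del Om : a < b -> a <= x <= b -> 0 < del -> 0 < Om ->
  exists y, a <= y <= b /\ Rabs (y - x) < del /\ cos (Om * y) <> 0.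
Proof.
  intros Hab Hx Hdel HOm. assert (HPI := PI_RGT_0).
  set (r := Rmin del (Rmin (b - a) (PI / Om)) / 2).
  assert (Hr1 := Rmin_l del (Rmin (b - a) (PI / Om))).
  assert (Hr2 := Rmin_r del (Rmin (b - a) (PI / Om))).
  assert (Hr3 := Rmin_l (b - a) (PI / Om)). assert (Hr4 := Rmin_r (b - a) (PI / Om)).
  assert (Hr : 0 < r).
  { unfold r. apply Rdiv_lt_0_compat; [|lra].
    repeat apply Rmin_pos; [lra | lra | apply Rdiv_lt_0_compat; lra]. }
  assert (Hr_del : r < del) by (unfold r in *; lra).
  assert (Hr_ba : 2 * r <= b - a) by (unfold r in *; lra).
  assert (HOmr : 0 < Om * r < PI).
  { split; [apply Rmult_lt_0_compat; lra|].
    replace PI with (Om * (PI / Om)) by (field; lra).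
    apply Rmult_lt_compat_l; [lra | unfold r in *; lra]. }
  clearbody r.
  (* two zeros of [cos (Om t)] are at least [PI / Om > r] apart *)
  assert (Hpair : forall y, cos (Om * y) <> 0 \/ cos (Om * (y + r / 2)) <> 0).
  { intro y.
    destruct (Req_dec (cos (Om * y)) 0) as [E1|E1]; [right|left; exact E1]. intro E2.
    assert (Hsin : 0 < sin (Om * (y + r / 2) - Om * y)).
    { replace (Om * (y + r / 2) - Om * y) with (Om * r / 2) by field. apply sin_gt_0; lra. }
    rewrite sin_minus, E1, E2 in Hsin. lra. }
  assert (Habs : forall t, - del < t < del -> Rabs t < del)
    by (intros t Ht; unfold Rabs; destruct Rcase_abs; lra).
  destruct (Rle_dec (x + r) b);
    [destruct (Hpair (x + r / 2)) as [H|H] | destruct (Hpair (x - r)) as [H|H]];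
    eexists; (split; [|split; [apply Habs|exact H]]); lra.
Qed.

Lemma zero_of_zero_off_cos_roots g Om a b : a < b -> 0 < Om ->
  (forall x, a <= x <= b -> continuity_pt g x) ->
  (forall x, a <= x <= b -> cos (Om * x) <> 0 -> g x = 0) ->
  forall x, a <= x <= b -> g x = 0.
Proof.
  intros Hab HOm Hc Hg x Hx.
  destruct (Req_dec (g x) 0) as [Hz|Hnz]; [exact Hz | exfalso].
  destruct (Hc x Hx (Rabs (g x)) (Rabs_pos_lt _ Hnz)) as [del [Hdel Hnear]].
  destruct (cos_nonzero_near a b x del Om Hab Hx Hdel HOm) as [y [Hy [Hyx Hcy]]].
  destruct (Req_dec y x) as [->|Hne]; [exact (Hnz (Hg x Hx Hcy))|].
  specialize (Hnear y (conj (conj I (not_eq_sym Hne)) Hyx)); simpl in Hnear; unfold R_dist in Hnear.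
  rewrite (Hg y Hy Hcy), Rminus_0_l, Rabs_Ropp in Hnear. lra.
Qed.

Lemma A_spec_unique J tau Om A B : is_interval J -> J 0 -> 0 < Om ->
  A_spec J tau Om A -> A_spec J tau Om B -> forall s, J s -> A s = B s.
Proof.
  intros HJ HJ0 HOm [HcA [HA0 HtA]] [HcB [HB0 HtB]] s Hs.
  assert (HJab := interval_segment J s HJ HJ0 Hs).
  destruct (segment_bounds s) as [H0ab Hsab].
  set (a := Rmin 0 s) in *. set (b := Rmax 0 s) in *.
  destruct (Req_dec s 0) as [->|Hs0]; [congruence|].
  assert (Hab : a < b) by (destruct (Rdichotomy s 0 Hs0); lra).
  set (K := fun y => A (clamp a b y) - B (clamp a b y)).
  assert (HcK : continuity K).
  { intro x; apply continuity_pt_minus;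
      apply (continuity_clamp J); auto; try lra; intros y Hy; auto. }
  assert (HsinK : forall x, a <= x <= b -> sin (2 * K x) = 0).
  { apply (zero_of_zero_off_cos_roots (fun y => sin (2 * K y)) Om); auto.
    - intros x _; prove_continuity.
    - intros x Hx Hcx. unfold K. rewrite clamp_id by exact Hx.
      apply sin_double_sub_of_tan_eq. rewrite HtA, HtB; auto. }
  assert (HK0 : K 0 = 0) by (unfold K; rewrite clamp_id by lra; rewrite HA0, HB0; ring).
  assert (HKs := continuous_zero_of_sin_double_zero K a b 0 s HcK H0ab Hsab HsinK HK0).
  unfold K in HKs. rewrite clamp_id in HKs by exact Hsab. lra.
Qed.

Section Pendulum.

Variables (tau E Om : R) (J : R -> Prop) (theta omega : R -> R).
Hypothesis HJ : is_interval J.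
Hypothesis HJ0 : J 0.
Hypothesis Hrange : forall s, J s -> - (PI / 2) < theta s < PI / 2.
Hypothesis Htheta : forall s, J s -> has_deriv_within J theta (omega s) s.
Hypothesis Homega : forall s, J s ->
  has_deriv_within J omega (- tau ^ 2 * tan (theta s) / (cos (theta s)) ^ 2) s.
Hypothesis Htheta0 : theta 0 = 0.
Hypothesis HE : forall s, J s -> E ^ 2 = omega s ^ 2 + tau ^ 2 * tan (theta s) ^ 2.
Hypothesis HOm_pos : 0 < Om.
Hypothesis HOm_sq : Om ^ 2 = E ^ 2 + tau ^ 2.

Lemma cos_theta_pos s : J s -> 0 < cos (theta s).
Proof. intro Hs; destruct (Hrange s Hs); apply cos_gt_0; lra. Qed.

Lemma energy_identity s : J s -> omega s ^ 2 + tau ^ 2 / cos (theta s) ^ 2 = Om ^ 2.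
Proof.
  intro Hs. assert (Hc := cos_theta_pos s Hs).
  rewrite HOm_sq, (HE s Hs).
  transitivity (omega s ^ 2
                + tau ^ 2 * ((sin (theta s))² + (cos (theta s))²) / cos (theta s) ^ 2).
  - rewrite sin2_cos2; field; lra.
  - unfold tan, Rsqr; field; lra.
Qed.

Lemma sin_theta_closed_form s : J s -> sin (theta s) = omega 0 / Om * sin (Om * s).
Proof.
  intro Hs.
  assert (HJab := interval_segment J s HJ HJ0 Hs).
  destruct (segment_bounds s) as [H0ab Hsab].
  set (a := Rmin 0 s) in *. set (b := Rmax 0 s) in *.
  set (Th := fun y => theta (clamp a b y)).
  set (W := fun y => omega (clamp a b y)).
  set (v := fun y => W y * cos (Th y) - omega 0 * cos (Om * y)).
  set (z := fun y => sin (Th y) - omega 0 / Om * sin (Om * y)).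
  (* [z] and [v] measure the distance to the explicit solution of the oscillator. *)
  set (F := fun y => v y ^ 2 + Om ^ 2 * z y ^ 2).
  assert (HcTh : continuity Th).
  { apply (continuity_clamp J); [auto | lra |].
    intros x Hx; eapply has_deriv_within_continuous, Htheta, HJab, Hx. }
  assert (HcW : continuity W).
  { apply (continuity_clamp J); [auto | lra |].
    intros x Hx; eapply has_deriv_within_continuous, Homega, HJab, Hx. }
  assert (HcF : forall x, a <= x <= b -> continuity_pt F x)
    by (intros x _; unfold F, v, z; prove_continuity).
  assert (HdF : forall x, a < x < b -> derivable_pt_lim F x 0).
  { intros x Hx. assert (HJx : J x) by (apply HJab; lra).
    assert (Hc := cos_theta_pos x HJx).
    assert (dTh : derivable_pt_lim Th x (omega x))
      by (apply (derivable_pt_lim_clamp J); auto).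
    assert (dW : derivable_pt_lim W x (- tau ^ 2 * tan (theta x) / (cos (theta x)) ^ 2))
      by (apply (derivable_pt_lim_clamp J); auto).
    assert (dv : derivable_pt_lim v x (- Om ^ 2 * z x)).
    { unfold v. differentiate. unfold z, Th, W. rewrite !clamp_id by lra.
      transitivity (- (omega x ^ 2 + tau ^ 2 / cos (theta x) ^ 2) * sin (theta x)
                    + Om * omega 0 * sin (Om * x)).
      - unfold tan; field; lra.
      - rewrite energy_identity by exact HJx. field; lra. }
    assert (dz : derivable_pt_lim z x (v x)).
    { unfold z. differentiate. unfold v, Th, W. rewrite !clamp_id by lra. field; lra. }
    unfold F. differentiate. simpl. ring. }
  assert (HF0 : F 0 = 0).
  { unfold F, v, z, W, Th. rewrite clamp_id, Htheta0, Rmult_0_r, cos_0, sin_0 by lra. ring. }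
  assert (HFs : F s = 0) by (rewrite (segment_constant F a b HcF HdF s 0); lra).
  assert (Hzs : z s = 0).
  { assert (Hv := pow2_ge_0 (v s)). assert (Hz := pow2_ge_0 (z s)).
    assert (HOm2 : 0 < Om ^ 2) by (apply pow_lt; lra).
    unfold F in HFs. apply Rsqr_0_uniq; unfold Rsqr; nra. }
  unfold z, Th in Hzs. rewrite clamp_id in Hzs by exact Hsab. lra.
Qed.

Lemma cos_theta_sq_closed_form s : J s ->
  cos (theta s) ^ 2 = cos (Om * s) ^ 2 + (tau / Om) ^ 2 * sin (Om * s) ^ 2.
Proof.
  intro Hs.
  assert (Hw0 : omega 0 ^ 2 = E ^ 2) by (rewrite (HE 0 HJ0), Htheta0, tan_0; ring).
  assert (H1 := sin2_cos2 (theta s)). assert (H2 := sin2_cos2 (Om * s)). unfold Rsqr in *.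
  replace (cos (theta s) ^ 2) with (1 - sin (theta s) ^ 2) by lra.
  replace (cos (Om * s) ^ 2) with (1 - sin (Om * s) ^ 2) by lra.
  rewrite sin_theta_closed_form by exact Hs.
  assert (Htau : (tau / Om) ^ 2 = 1 - (omega 0 / Om) ^ 2).
  { field_simplify_eq; [rewrite Hw0; lra | lra]. }
  rewrite Htau. ring.
Qed.

Lemma shifted_phi_A_spec (phi : R -> R) :
  (forall s, J s -> has_deriv_within J phi (tau * tan (theta s) ^ 2) s) ->
  A_spec J tau Om (fun y => phi y - phi 0 + tau * y).
Proof.
  intro Hphi. set (D := fun y => phi y - phi 0 + tau * y).
  assert (HD0 : D 0 = 0) by (unfold D; ring).
  assert (HdD : forall s, J s -> has_deriv_within J D
     (tau / Om * Om / (cos (Om * s) ^ 2 + (tau / Om) ^ 2 * sin (Om * s) ^ 2)) s).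
  { intros s Hs. rewrite <- cos_theta_sq_closed_form by exact Hs.
    assert (Hc := cos_theta_pos s Hs).
    replace (tau / Om * Om / cos (theta s) ^ 2) with (tau * tan (theta s) ^ 2 + tau).
    - apply has_deriv_within_shift, Hphi, Hs.
    - transitivity (tau * ((sin (theta s))² + (cos (theta s))²) / cos (theta s) ^ 2).
      + unfold tan, Rsqr; field; lra.
      + rewrite sin2_cos2; field; lra. }
  assert (Hrel := scaled_tan_relation_of_deriv J (tau / Om) Om D HJ HJ0 HD0).
  split; [|split; [exact HD0|]].
  - intros s Hs. eapply has_deriv_within_continuous, HdD, Hs.
  - intros s Hs Hcos. apply tan_of_scaled_tan_relation; [|exact Hcos].
    apply Hrel; [|exact HdD|exact Hs].
    intros t Ht. rewrite <- cos_theta_sq_closed_form by exact Ht.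
    apply pow_lt, cos_theta_pos, Ht.
Qed.

End Pendulum.

Theorem lemma4p15 (tau : R) (J : R -> Prop) (theta omega phi : R -> R) (E : R)
  (HJ : is_interval J) (HJ0 : J 0)
  (Hrange : forall s, J s -> - (PI / 2) < theta s < PI / 2)
  (Htheta : forall s, J s -> has_deriv_within J theta (omega s) s)
  (Homega : forall s, J s ->
     has_deriv_within J omega (- tau ^ 2 * tan (theta s) / (cos (theta s)) ^ 2) s)
  (Htheta0 : theta 0 = 0)
  (HE0 : 0 <= E)
  (HE : forall s, J s -> E ^ 2 = omega s ^ 2 + tau ^ 2 * tan (theta s) ^ 2)
  (Hpos : 0 < E ^ 2 + tau ^ 2)
  (Hphi : forall s, J s -> has_deriv_within J phi (tau * tan (theta s) ^ 2) s) :
  let Om := sqrt (E ^ 2 + tau ^ 2) in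
  (exists A, A_spec J tau Om A) /\
  (forall A, A_spec J tau Om A ->
     forall s, J s -> phi s - phi 0 = A s - tau * s).
Proof.
  intro Om.
  assert (HOm_pos : 0 < Om) by (apply sqrt_lt_R0; exact Hpos).
  assert (HOm_sq : Om ^ 2 = E ^ 2 + tau ^ 2) by (apply pow2_sqrt; lra).
  assert (HD : A_spec J tau Om (fun y => phi y - phi 0 + tau * y))
    by (apply (shifted_phi_A_spec tau E Om J theta omega); assumption).
  split; [eexists; exact HD|].
  intros A HA s Hs.
  rewrite (A_spec_unique J tau Om A _ HJ HJ0 HOm_pos HA HD s Hs). ring.
Qed.
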